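(* Let $A=(a_{ij})$ be an $n\times n$ symmetric matrix with nonnegative entries and zero diagonal, $V=\{1,\dots,n\}$, and let $S\subseteq V$ with $S\neq\emptyset$. Define $$\gamma_S=\max_{\mathbf{x}\in\Delta_{V\setminus S}}\ \min_{i\in S}\ \frac{\mathbf{x}'A\mathbf{x}-(A\mathbf{x})_i}{\mathbf{x}'\mathbf{x}}.$$ Then $\gamma_S\le\lambda_{\max}(A_{V\setminus S})$, where $\lambda_{\max}(A_{V\setminus S})$ is the largest eigenvalue of the principal submatrix of $A$ indexed by the elements of $V\setminus S$.
   Context: $\Delta=\{\mathbf{x}\in\mathbb{R}^n:\sum_i x_i=1,\ x_i\ge 0\}$ is the standard simplex; for $T\subseteq V$, $\Delta_T=\{\mathbf{x}\in\Delta:\sigma(\mathbf{x})\subseteq T\}$, where $\sigma(\mathbf{x})=\{i: x_i>0\}$. A prime denotes transposition. *)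

From HB Require Import structures.
From mathcomp Require Import all_boot all_order all_algebra.
From mathcomp Require Import reals.
Set Implicit Arguments. Unset Strict Implicit. Unset Printing Implicit Defensive.
Import Order.TTheory GRing.Theory Num.Theory.
Local Open Scope ring_scope.

(* Vectors in R^n are column vectors 'cV[R]_n; V = 'I_n (0-based). *)

Definition in_simplex_on (R : realType) (n : nat) (T : {set 'I_n})
  (x : 'cV[R]_n) : Prop :=
  [/\ \sum_(i < n) x i 0 = 1,
      (forall i, 0 <= x i 0) &
      (forall i, 0 < x i 0 -> i \in T)].

(* minimum of f over a (nonempty) finite set S; 0 on the empty set (unused) *)
Definition min_over (R : realType) (n : nat) (S : {set 'I_n})
  (f : 'I_n -> R) : R :=
  match [pick i in S] with
  | Some i0 => \big[Num.min/f i0]_(i in S) f i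
  | None => 0
  end.

Definition gamma_term (R : realType) (n : nat) (A : 'M[R]_n)
  (x : 'cV[R]_n) (i : 'I_n) : R :=
  (((x^T *m A *m x) 0 0) - (A *m x) i 0) / ((x^T *m x) 0 0).

Definition principal_submx (R : realType) (n : nat) (A : 'M[R]_n)
  (T : {set 'I_n}) : 'M[R]_#|T| :=
  \matrix_(i, j) A (enum_val i) (enum_val j).

Definition is_lambda_max (R : realType) (m : nat) (M : 'M[R]_m) (l : R) : Prop :=
  eigenvalue M l /\ (forall mu, eigenvalue M mu -> mu <= l).

(* For a symmetric M, the maximum l of v'Mv over the unit sphere (attained by
   compactness) bounds the Rayleigh quotient everywhere, so l%:M - M is positive
   semidefinite; its form vanishes at the maximiser c, hence c(l%:M - M) = 0 and
   l is the largest eigenvalue.  For x in the simplex on V \ S, x'Ax / x'x is the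
   Rayleigh quotient of A_{V\S} at the restriction of x, while (Ax)_i >= 0, so
   every term of the minimum is at most l. *)

From HB Require Import structures.
From mathcomp Require Import all_boot all_order all_algebra.
From mathcomp Require Import reals.
From mathcomp Require boolp classical_sets topology normedtype derive.
From mathcomp Require Import ring lra.
Import Order.TTheory GRing.Theory Num.Theory.
Set Implicit Arguments. Unset Strict Implicit. Unset Printing Implicit Defensive.
Local Open Scope ring_scope.

Section QuadraticForm.
Variable R : realFieldType.
Implicit Types (m : nat).

Definition qform m (M : 'M[R]_m) (u v : 'rV[R]_m) : R := (u *m M *m v^T) 0 0.

Definition sqnorm m (u : 'rV[R]_m) : R := qform 1%:M u u.

Lemma sqnormE m (u : 'rV[R]_m) : sqnorm u = \sum_j u 0 j ^+ 2.
Proof.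
by rewrite /sqnorm /qform mulmx1 mxE; apply: eq_bigr => j _; rewrite mxE expr2.
Qed.

Lemma sqnorm_ge0 m (u : 'rV[R]_m) : 0 <= sqnorm u.
Proof. by rewrite sqnormE sumr_ge0 // => j _; rewrite sqr_ge0. Qed.

Lemma sqnorm_eq0 m (u : 'rV[R]_m) : (sqnorm u == 0) = (u == 0).
Proof.
apply/eqP/eqP => [|->]; last by rewrite sqnormE big1 // => j _; rewrite mxE expr0n.
rewrite sqnormE => /psumr_eq0P u0; apply/rowP => j; rewrite mxE.
by apply/eqP; rewrite -sqrf_eq0 u0 // => i _; rewrite sqr_ge0.
Qed.

Lemma sqnorm_gt0 m (u : 'rV[R]_m) : (0 < sqnorm u) = (u != 0).
Proof. by rewrite lt_def sqnorm_eq0 sqnorm_ge0 andbT. Qed.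

Lemma qformC m (M : 'M[R]_m) u v : M^T = M -> qform M v u = qform M u v.
Proof.
move=> sM; rewrite /qform -[in RHS](trmxK (u *m M *m v^T)) [in RHS]mxE.
by rewrite !trmx_mul trmxK sM mulmxA.
Qed.

Lemma qform0l m (M : 'M[R]_m) v : qform M 0 v = 0.
Proof. by rewrite /qform !mul0mx mxE. Qed.

Lemma qformDl m (M : 'M[R]_m) u w v : qform M (u + w) v = qform M u v + qform M w v.
Proof.
by rewrite /qform mulmxDl mulmxDl; set a := _ *m v^T; set b := _ *m v^T; rewrite mxE.
Qed.

Lemma qformZl m (M : 'M[R]_m) a u v : qform M (a *: u) v = a * qform M u v.
Proof. by rewrite /qform -!scalemxAl mxE. Qed.

Lemma qformDr m (M : 'M[R]_m) u v w : qform M u (v + w) = qform M u v + qform M u w.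
Proof.
by rewrite /qform linearD /= mulmxDr; set a := _ *m v^T; set b := _ *m w^T; rewrite mxE.
Qed.

Lemma qformZr m (M : 'M[R]_m) a u v : qform M u (a *: v) = a * qform M u v.
Proof. by rewrite /qform linearZ /= -scalemxAr mxE. Qed.

Lemma qform_addZ m (M : 'M[R]_m) u v t : M^T = M ->
  qform M (u + t *: v) (u + t *: v) =
  qform M u u + 2 * t * qform M u v + t ^+ 2 * qform M v v.
Proof.
move=> sM; rewrite qformDl !qformDr !qformZl !qformZr (qformC v u sM); ring.
Qed.

Lemma qform_scalar_subr m (M : 'M[R]_m) l u :
  qform (l%:M - M) u u = l * sqnorm u - qform M u u.
Proof.
by rewrite /sqnorm /qform mulmxBr mul_mx_scalar mulmxBl -scalemxAl mulmx1 !mxE.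
Qed.

Lemma quadratic_ge0_linear_eq0 (b p : R) :
  0 <= p -> (forall t, 0 <= 2 * t * b + t ^+ 2 * p) -> b = 0.
Proof.
move=> p_ge0 quad_ge0.
(* at t = -b/(p+1) the quadratic equals -t^2 (p+2) *)
set t := - b / (p + 1).
have bE : b = - t * (p + 1).
  by rewrite /t mulNr divfK ?opprK // gt_eqF // ltr_wpDl.
have H := quad_ge0 t; rewrite bE in H.
have t0 : t = 0 by apply/eqP; rewrite -sqrf_eq0 eq_le sqr_ge0 andbT; nra.
by rewrite bE t0 oppr0 mul0r.
Qed.

Lemma psd_qform_eq0_mulmx m (B : 'M[R]_m) c : B^T = B ->
  (forall u, 0 <= qform B u u) -> qform B c c = 0 -> c *m B = 0.
Proof.
move=> sB B_psd c0; apply/eqP; rewrite -sqnorm_eq0; apply/eqP.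
have -> : sqnorm (c *m B) = qform B c (c *m B) by rewrite /sqnorm /qform mulmx1.
apply: (quadratic_ge0_linear_eq0 (B_psd (c *m B))) => t.
by have := B_psd (c + t *: (c *m B)); rewrite qform_addZ // c0 add0r.
Qed.

End QuadraticForm.

Section RayleighQuotient.
Import boolp classical_sets topology normedtype derive.
Import numFieldTopology.Exports numFieldNormedType.Exports.
Variable R : realType.
Local Open Scope classical_set_scope.
Local Open Scope ring_scope.
Implicit Types (m : nat).

Lemma qform_continuous m (M : 'M[R]_m) : continuous (fun v => qform M v v).
Proof.
have coord j : continuous (fun v : 'rV[R]_m => v 0 j) by exact: coord_continuous.
have -> : (fun v => qform M v v) = fun v => \sum_j (\sum_k v 0 k * M k j) * v 0 j.
  by apply: funext => v; rewrite /qform mxE; apply: eq_bigr => j _; rewrite !mxE.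
apply: (continuous_big add_continuous) => j _ v.
apply: continuousM; last exact: coord.
apply: (continuous_big add_continuous) => k _ w.
by apply: continuousM; [exact: coord | exact: cst_continuous].
Qed.

Lemma unit_sphere_compact m : compact [set v : 'rV[R]_m | sqnorm v = 1].
Proof.
apply: bounded_closed_compact.
- exists 1; split => // r r_gt1 v /= v1; apply: le_trans (ltW r_gt1).
  rewrite /Num.norm /= mx_normrE; apply: (big_ind (fun z => z <= 1)) => // [x y|[a b] _].
    by rewrite ge_max => -> ->.
  have : v 0 b ^+ 2 <= 1.
    move: v1; rewrite sqnormE (bigD1 b) //= => <-.
    by rewrite lerDl sumr_ge0 // => j _; rewrite sqr_ge0.
  by rewrite (ord1 a) => vb; rewrite ler_norml; apply/andP; split; nra.
- apply: (@preimage_closed _ _ (@sqnorm R m) [set 1]); last exact: closed_eq.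
  by move=> v _; exact: qform_continuous.
Qed.

Lemma qform_max_on_unit_sphere m (M : 'M[R]_m) : (0 < m)%N ->
  exists2 c : 'rV[R]_m, sqnorm c = 1 & forall v, qform M v v <= qform M c c * sqnorm v.
Proof.
move=> m_gt0; set sphere := [set v : 'rV[R]_m | sqnorm v = 1].
have sphere_ne : sphere !=set0.
  exists (delta_mx 0 (Ordinal m_gt0)); rewrite /sphere /= sqnormE.
  rewrite (bigD1 (Ordinal m_gt0)) //= big1 ?mxE ?eqxx ?addr0 ?expr1n //.
  by move=> j /negbTE jn; rewrite mxE jn andbF expr0n.
have [c c1 c_max] := compact_EVT_max sphere_ne (@unit_sphere_compact m)
  (continuous_subspaceT (@qform_continuous _ M)).
exists c; first by rewrite inE in c1; exact c1.
move=> v; have [->|v_neq0] := eqVneq v 0.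
  by rewrite /sqnorm !qform0l mulr0.
have v_gt0 : 0 < sqnorm v by rewrite sqnorm_gt0.
set s := Num.sqrt (sqnorm v).
have s_gt0 : 0 < s by rewrite sqrtr_gt0.
have s2 : s ^+ 2 = sqnorm v by rewrite sqr_sqrtr // ltW.
have scaleE N u : qform N (s^-1 *: u) (s^-1 *: u) = qform N u u / sqnorm v.
  by rewrite qformZl qformZr mulrA -expr2 exprVn s2 mulrC.
have := c_max (s^-1 *: v); rewrite inE /sphere /= /sqnorm !scaleE -/(sqnorm v).
by rewrite divff ?gt_eqF // -ler_pdivrMr //; apply.
Qed.

Lemma is_lambda_max_qform_bound m (M : 'M[R]_m) l c : M^T = M ->
  (forall v, qform M v v <= l * sqnorm v) ->
  c != 0 -> qform M c c = l * sqnorm c -> is_lambda_max M l.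
Proof.
move=> sM bound c_neq0 c_max; split.
  apply/eigenvalueP; exists c => //.
  have : c *m (l%:M - M) = 0.
    apply: psd_qform_eq0_mulmx.
    - by rewrite linearB /= tr_scalar_mx sM.
    - by move=> u; rewrite qform_scalar_subr subr_ge0.
    - by rewrite qform_scalar_subr c_max subrr.
  by move/eqP; rewrite mulmxBr mul_mx_scalar subr_eq0 => /eqP <-.
move=> mu /eigenvalueP [v vM v_neq0].
have vE : qform M v v = mu * sqnorm v.
  by rewrite /sqnorm /qform vM mulmx1 -scalemxAl mxE.
have v_gt0 : 0 < sqnorm v by rewrite sqnorm_gt0.
by rewrite -(ler_pM2r v_gt0) -vE.
Qed.

Lemma sym_lambda_max_qform m (M : 'M[R]_m) : (0 < m)%N -> M^T = M ->
  exists l, is_lambda_max M l /\ forall v, qform M v v <= l * sqnorm v.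
Proof.
move=> m_gt0 sM; have [c c1 c_max] := qform_max_on_unit_sphere M m_gt0.
exists (qform M c c); split => //.
apply: (is_lambda_max_qform_bound (c := c) sM c_max); last by rewrite c1 mulr1.
by rewrite -sqnorm_eq0 c1 oner_eq0.
Qed.

End RayleighQuotient.

Section PrincipalSubmatrix.
Variables (R : realType) (n : nat) (T : {set 'I_n}).

Definition principal_subvec (x : 'cV[R]_n) : 'rV[R]_#|T| := \row_k x (enum_val k) 0.

Lemma sum_enum_val_supp (F : 'I_n -> R) : (forall i, i \notin T -> F i = 0) ->
  \sum_i F i = \sum_(k < #|T|) F (enum_val k).
Proof.
move=> F0; rewrite (bigID (mem T)) /= [X in _ + X]big1 ?addr0; last by move=> i /F0.
exact: big_enum_val.
Qed.

Lemma principal_submx_sym (A : 'M[R]_n) :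
  A^T = A -> (principal_submx A T)^T = principal_submx A T.
Proof. by move=> sA; apply/matrixP => i j; rewrite !mxE -[in RHS]sA mxE. Qed.

Variable x : 'cV[R]_n.
Hypothesis x_supp : forall i, i \notin T -> x i 0 = 0.

Lemma qform_principal_submx (A : 'M[R]_n) : (x^T *m A *m x) 0 0 =
  qform (principal_submx A T) (principal_subvec x) (principal_subvec x).
Proof.
rewrite /qform !mxE (sum_enum_val_supp (fun i => _)) => [|i iT]; last first.
  by rewrite x_supp ?mulr0.
apply: eq_bigr => k _; rewrite !mxE; congr (_ * _).
rewrite (sum_enum_val_supp (fun i => _)) => [|i iT]; last by rewrite mxE x_supp ?mul0r.
by apply: eq_bigr => k' _; rewrite !mxE.
Qed.

Lemma sqnorm_principal_subvec : (x^T *m x) 0 0 = sqnorm (principal_subvec x).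
Proof.
rewrite sqnormE mxE (sum_enum_val_supp (fun i => _)) => [|i iT]; last first.
  by rewrite mxE x_supp ?mulr0.
by apply: eq_bigr => k _; rewrite !mxE expr2.
Qed.

End PrincipalSubmatrix.

Section Simplex.
Variables (R : realType) (n : nat) (T : {set 'I_n}) (x : 'cV[R]_n).
Hypothesis xT : in_simplex_on T x.

Lemma in_simplex_on_supp i : i \notin T -> x i 0 = 0.
Proof.
case: xT => _ x_ge0 x_supp iT; apply/eqP; rewrite eq_le x_ge0 andbT leNgt.
by apply: contra iT => /x_supp.
Qed.

Lemma in_simplex_on_subvec_neq0 : principal_subvec T x != 0.
Proof.
apply/eqP => x0; case: xT => + _ _; rewrite (sum_enum_val_supp in_simplex_on_supp).
rewrite big1 => [/eqP|k _]; first by rewrite eq_sym oner_eq0.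
by have := congr1 (fun y : 'rV_#|T| => y 0 k) x0; rewrite !mxE.
Qed.

Lemma in_simplex_on_card_gt0 : (0 < #|T|)%N.
Proof.
have /rV0Pn[k _] := in_simplex_on_subvec_neq0.
by apply/card_gt0P; exists (enum_val k); exact: enum_valP.
Qed.

End Simplex.

Lemma min_over_le (R : realType) n (S : {set 'I_n}) (f : 'I_n -> R) i :
  i \in S -> min_over S f <= f i.
Proof.
move=> iS; rewrite /min_over; case: pickP => [i0 _|/(_ i)]; last by rewrite iS.
by rewrite (bigD1 i) //= ge_min lexx.
Qed.

Lemma mulmx_col_ge0 (R : realType) n (A : 'M[R]_n) (x : 'cV[R]_n) i :
  (forall i j, 0 <= A i j) -> (forall j, 0 <= x j 0) -> 0 <= (A *m x) i 0.
Proof. by move=> A_ge0 x_ge0; rewrite mxE sumr_ge0 // => j _; rewrite mulr_ge0. Qed.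

Lemma gamma_term_le (R : realType) n (A : 'M[R]_n) x i l :
  0 < (x^T *m x) 0 0 -> (x^T *m A *m x) 0 0 <= l * (x^T *m x) 0 0 ->
  0 <= (A *m x) i 0 -> gamma_term A x i <= l.
Proof.
move=> xx_gt0 xAx_le Axi_ge0; rewrite /gamma_term ler_pdivrMr //.
by apply: le_trans xAx_le; rewrite gerBl.
Qed.

Theorem proposition2 (R : realType) (n : nat) (A : 'M[R]_n) (S : {set 'I_n}) :
  A^T = A ->
  (forall i j, 0 <= A i j) ->
  (forall i, A i i = 0) ->
  S != set0 ->
  forall x : 'cV[R]_n, in_simplex_on (~: S) x ->
  exists l : R, is_lambda_max (principal_submx A (~: S)) l /\
    min_over S (gamma_term A x) <= l.
Proof.
move=> sA A_ge0 _ /set0Pn[i iS] x xT.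
have x_supp := in_simplex_on_supp xT.
have [l [l_max l_bound]] := sym_lambda_max_qform (in_simplex_on_card_gt0 xT)
  (principal_submx_sym (~: S) sA).
exists l; split => //; apply: le_trans (min_over_le _ iS) _.
apply: gamma_term_le.
- by rewrite (sqnorm_principal_subvec x_supp) sqnorm_gt0 in_simplex_on_subvec_neq0.
- by rewrite (qform_principal_submx x_supp) (sqnorm_principal_subvec x_supp).
- by apply: mulmx_col_ge0 => // j; case: xT.
Qed.
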